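(* Let $c$ be a prime of the form $2^r\cdot 3+1$ ($r\ge 1$), and let $a,b>1$ be integers with $a,b,c$ pairwise coprime and $e_c(b)=3$. Suppose positive integers $z,Y,Z$ with $z\le Z$ and $Y\equiv 4\pmod 6$ satisfy $a+b=c^z$ and $a+b^Y=c^Z$. Write $Y=1+3N$ ($N$ odd) and $e=\nu_c(N)$, and let $I(t)=\sum_{j=0}^{N-1}t^{3j}\in\mathbb Z[t]$. Then $e<z$ and there is a positive integer $K$ with $\gcd(K,c)=1$ such that \[ b^2+b+1=K\,c^{z-e},\qquad b(b-1)\,I(b)\,K=c^e(c^{Z-z}-1). \]
   Context: For a positive integer $M$ and an integer $A$ coprime to $M$, $e_M(A)$ denotes the least positive integer $e$ such that $A^e\equiv 1$ or $A^e\equiv -1\pmod M$. $\nu_c$ is the $c$-adic valuation. *)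

From mathcomp Require Import all_boot all_order all_algebra.
Set Implicit Arguments. Unset Strict Implicit. Unset Printing Implicit Defensive.
Import GRing.Theory.

Definition pm1_mod (M A e : nat) : bool :=
  (A ^ e %% M == 1 %% M) || ((A ^ e).+1 %% M == 0).

Definition e_ord (M A e : nat) : Prop :=
  [/\ 0 < e, pm1_mod M A e & forall k, 0 < k -> k < e -> ~~ pm1_mod M A k].

Definition Ipoly (N : nat) : {poly int} := (\sum_(j < N) 'X^(3 * j))%R.

From mathcomp Require Import all_boot all_order all_algebra.
From mathcomp Require Import zify.
Import GRing.Theory.
Set Implicit Arguments. Unset Strict Implicit. Unset Printing Implicit Defensive.

(* Subtracting the two equations gives [b (b^(3N) - 1) = c^z (c^(Z-z) - 1)], and
   [b^(3N) - 1 = (b - 1)(b^2 + b + 1) I(b)].  Since e_c(b) = 3 and N is odd,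
   [b^3 = 1 (mod c)] while [b <> 1 (mod c)], so c divides b^2 + b + 1 but neither
   b nor b - 1.  Lifting the exponent gives nu_c(I(b)) = nu_c(N) = e, and
   c^(Z-z) - 1 is prime to c, so comparing c-adic valuations yields
   nu_c(b^2 + b + 1) = z - e >= 1; K is the c-free part of b^2 + b + 1. *)

Definition geom_sum (x n : nat) := \sum_(j < n) x ^ j.

Lemma geom_sum_gt0 x n : 0 < n -> 0 < geom_sum x n.
Proof. by case: n => // n _; rewrite /geom_sum big_ord_recl expn0 addn_gt0. Qed.

Lemma subn1_geom_sum x n : (x - 1) * geom_sum x n = x ^ n - 1.
Proof.
case: x => [|x]; first by rewrite sub0n mul0n; case: n => [|n] //; rewrite exp0n.
elim: n => [|n IH]; first by rewrite /geom_sum big_ord0 muln0 expn0.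
rewrite /geom_sum big_ord_recr /= -/(geom_sum x.+1 n) mulnDr IH expnS.
have : 0 < x.+1 ^ n by rewrite expn_gt0.
move: (x.+1 ^ n) => X X0; nia.
Qed.

Lemma geom_sumD x m n :
  geom_sum x (m + n) = geom_sum x m + x ^ m * geom_sum x n.
Proof.
rewrite /geom_sum big_split_ord big_distrr /=.
by congr (_ + _); apply: eq_bigr => i _; rewrite expnD.
Qed.

Lemma geom_sumM x m n :
  geom_sum x (m * n) = geom_sum x m * geom_sum (x ^ m) n.
Proof.
elim: n => [|n IH]; first by rewrite muln0 /geom_sum !big_ord0 muln0.
rewrite mulnS geom_sumD IH /geom_sum big_ord_recl /= -/(geom_sum x m).
rewrite expn0 mulnDr muln1 mulnCA big_distrr /=; congr (_ + _ * _).
by apply: eq_bigr => i _; rewrite -expnS.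
Qed.

Lemma geom_sum_mod x n d : x = 1 %[mod d] -> geom_sum x n = n %[mod d].
Proof.
move=> x1; elim: n => [|n IH]; first by rewrite /geom_sum big_ord0.
rewrite /geom_sum big_ord_recr /= -/(geom_sum x n) -modnDm IH -modnXm x1.
by rewrite modnXm exp1n modnDm addn1.
Qed.

Lemma expn_mod_sqr q p j : (1 + q * p) ^ j = 1 + j * q * p %[mod p ^ 2].
Proof.
elim: j => [|j IH]; first by rewrite expn0 mul0n.
rewrite expnSr -modnMml IH modnMml.
have -> : (1 + j * q * p) * (1 + q * p) = j * q * q * p ^ 2 + (1 + j.+1 * q * p).
  by rewrite expnS expn1; nia.
by rewrite modnMDl.
Qed.

(* The step of the lifting-the-exponent lemma: for [y = 1 + q p] the terms
   [y ^ j = 1 + j q p (mod p^2)] add up to [p + q p C(p,2) = p (mod p^2)],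
   because [p] divides [C(p,2)] when [p] is odd. *)
Lemma logn_geom_sum_prime p y :
  prime p -> odd p -> y = 1 %[mod p] -> logn p (geom_sum y p) = 1.
Proof.
move=> pp op y1; have p1 := prime_gt1 pp.
have [q ->] : exists q, y = 1 + q * p.
  by exists (y %/ p); rewrite {1}(divn_eq y p) y1 modn_small // addnC.
have p_neq2 : p != 2 by apply: contraTneq op => ->.
have p2 : 0 < 2 < p by lia.
have [t binp] := dvdnP (prime_dvd_bin pp p2).
have Smod : geom_sum (1 + q * p) p = p %[mod p ^ 2].
  rewrite /geom_sum -modn_summ; under eq_bigr => j _ do rewrite expn_mod_sqr.
  rewrite modn_summ big_split /= sum1_card card_ord.
  have -> : \sum_(j < p) j * q * p = q * t * p ^ 2.
    have sum_id : \sum_(j < p) j = 'C(p, 2) by rewrite -bin2_sum big_mkord.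
    by rewrite -!big_distrl /= sum_id binp expnS expn1; lia.
  by rewrite addnC modnMDl.
move: Smod; rewrite (modn_small (_ : p < p ^ 2)); last by rewrite expnS expn1; nia.
set S := geom_sum _ _ => Smod.
have -> : S = p * (1 + p * (S %/ p ^ 2)).
  by rewrite {1}(divn_eq S (p ^ 2)) Smod expnS expn1; lia.
rewrite lognM ?addn_gt0 ?(prime_gt0 pp) //.
rewrite (logn_prime p pp) eqxx logn_coprime //.
by rewrite /coprime addnC mulnC gcdnMDl gcdn1.
Qed.

(* Lifting the exponent: [nu_p (x^n - 1) = nu_p (x - 1) + nu_p n] in the
   form [nu_p ((x^n - 1)/(x - 1)) = nu_p n]. *)
Lemma logn_geom_sum p x n :
  prime p -> odd p -> x = 1 %[mod p] -> 0 < n -> logn p (geom_sum x n) = logn p n.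
Proof.
move=> pp op x1 n0; have [m pm ->] := pfactor_coprime pp n0.
have m0 : 0 < m.
  by case: m pm => //; rewrite /coprime gcdn0 => /eqP p_eq1; rewrite p_eq1 in pp.
have pX_gt0 k : 0 < p ^ k by rewrite expn_gt0 prime_gt0.
rewrite lognM // pfactorK // (logn_coprime pm).
elim: (logn p n) => [|k IH].
  by rewrite muln1 logn_coprime // /coprime -gcdn_modr geom_sum_mod // gcdn_modr.
rewrite expnSr mulnA geom_sumM.
rewrite lognM ?geom_sum_gt0 ?muln_gt0 ?m0 ?pX_gt0 ?prime_gt0 // IH.
by rewrite logn_geom_sum_prime // ?addn1 // -modnXm x1 modnXm exp1n.
Qed.

Lemma pm1_mod_odd_pow M A e N :
  2 < M -> pm1_mod M A e -> odd N -> A ^ (e * N) = 1 %[mod M] -> A ^ e = 1 %[mod M].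
Proof.
move=> M_gt2 /orP[/eqP // | /eqP y_neg1] oN; rewrite expnM.
set y := A ^ e in y_neg1 *; clearbody y.
have y_gt0 : 0 < y by case: y y_neg1 => //; rewrite modn_small //; lia.
have y2 : y ^ 2 = 1 %[mod M].
  have -> : y ^ 2 = (y - 1) * y.+1 + 1 by rewrite expnS expn1; nia.
  by rewrite -modnDml -modnMmr y_neg1 muln0 mod0n.
have yN : y ^ N = y %[mod M].
  rewrite -(odd_double_half N) oN -mul2n expnD expn1 expnM.
  by rewrite -modnMmr -modnXm y2 modnXm exp1n modnMmr muln1.
move=> yN1; have : y.+1 = 2 %[mod M] by rewrite -addn1 -modnDml -yN yN1 modnDml.
by rewrite y_neg1 (modn_small M_gt2).
Qed.

Lemma prime_dvd_cube_root p b :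
  prime p -> 0 < b -> b ^ 3 = 1 %[mod p] -> b != 1 %[mod p] -> p %| b ^ 2 + b + 1.
Proof.
move=> pp b_gt0 b3 b_neq1.
have cube_factor : b ^ 3 - 1 = (b - 1) * (b ^ 2 + b + 1) by rewrite !expnS expn0; nia.
have : p %| b ^ 3 - 1 by rewrite -eqn_mod_dvd ?expn_gt0 ?b_gt0 //; apply/eqP.
by rewrite cube_factor Euclid_dvdM // -eqn_mod_dvd // (negbTE b_neq1).
Qed.

Lemma logn_pfactor_subn1 p k : 1 < p -> logn p (p ^ k - 1) = 0.
Proof.
move=> p_gt1; case: k => [|k]; first by rewrite subnn logn0.
have pk_gt0 : 0 < p ^ k by rewrite expn_gt0 ltnW.
have -> : p ^ k.+1 - 1 = (p ^ k - 1) * p + p.-1 by rewrite expnS; nia.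
by rewrite logn_coprime // /coprime gcdnMDl -/(coprime p p.-1) coprimenP // ltnW.
Qed.

Lemma sub_pow_eq a b c z Z k :
  a + b = c ^ z -> a + b ^ k.+1 = c ^ Z -> z <= Z ->
  b * (b ^ k - 1) = c ^ z * (c ^ (Z - z) - 1).
Proof.
move=> eq_z eq_Z zZ; rewrite !mulnBr !muln1 -expnS -expnD subnKC //.
by rewrite -eq_z -eq_Z subnDl.
Qed.

Lemma Ipoly_horner N (b : nat) : ((Ipoly N).[b%:Z] = (geom_sum (b ^ 3) N)%:Z)%R.
Proof.
rewrite /Ipoly horner_sum /geom_sum -[in RHS]natz natr_sum.
by apply: eq_bigr => j _; rewrite hornerXn !natrX -exprM natz.
Qed.

Lemma pow3_subn1_factor b N :
  b ^ (3 * N) - 1 = (b - 1) * (b ^ 2 + b + 1) * geom_sum (b ^ 3) N.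
Proof.
have cube_factor : b ^ 3 - 1 = (b - 1) * (b ^ 2 + b + 1).
  by case: b => [|b]; rewrite ?muln0 // !expnS expn0 muln1; nia.
by rewrite -cube_factor subn1_geom_sum expnM.
Qed.

Section CubeOrder.

Variables (c b z Z N : nat).
Hypotheses (pc : prime c) (oc : odd c) (b_gt1 : 1 < b) (cb : coprime b c).
Hypotheses (b_pm1 : pm1_mod c b 3) (b_neq1 : b != 1 %[mod c]).
Hypotheses (oN : odd N) (z_gt0 : 0 < z).
Hypothesis eq_diff : b * (b ^ (3 * N) - 1) = c ^ z * (c ^ (Z - z) - 1).

Let c_gt2 : 2 < c.
Proof. by have := prime_gt1 pc; case: c oc => [|[|[]]]. Qed.

Let N_gt0 : 0 < N.
Proof. exact: odd_gt0. Qed.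

Lemma cube_eq1 : b ^ 3 = 1 %[mod c].
Proof.
apply: pm1_mod_odd_pow oN _ => //; apply/eqP.
rewrite eqn_mod_dvd ?expn_gt0 ?(ltnW b_gt1) // -(Gauss_dvdr _ (n := b)) 1?coprime_sym //.
by rewrite eq_diff dvdn_mulr // dvdn_exp.
Qed.

Lemma dvd_cube_root : c %| b ^ 2 + b + 1.
Proof. by apply: prime_dvd_cube_root cube_eq1 b_neq1; rewrite // ltnW. Qed.

Lemma pow3_subn1_gt0 : 0 < b ^ (3 * N) - 1.
Proof. by rewrite subn_gt0 -{1}(expn0 b) ltn_exp2l // muln_gt0. Qed.

Lemma z_lt_Z : z < Z.
Proof.
rewrite -subn_gt0 lt0n; apply/eqP => Zz.
have : 0 < b * (b ^ (3 * N) - 1) by rewrite muln_gt0 ltnW ?pow3_subn1_gt0.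
by rewrite eq_diff Zz subnn muln0.
Qed.

Lemma logn_pow3_subn1 : logn c (b ^ (3 * N) - 1) = logn c (b ^ 2 + b + 1) + logn c N.
Proof.
have b1_gt0 : 0 < b - 1 by rewrite subn_gt0.
have c_ndvd_b1 : ~~ (c %| b - 1) by rewrite -eqn_mod_dvd 1?ltnW.
rewrite pow3_subn1_factor !lognM ?muln_gt0 ?b1_gt0 ?geom_sum_gt0 ?addn1 //.
by rewrite [logn c (b - 1)]lognE (negbTE c_ndvd_b1) !andbF add0n logn_geom_sum // cube_eq1.
Qed.

Lemma logn_cube_root_add : logn c (b ^ 2 + b + 1) + logn c N = z.
Proof.
have cZz_subn1_gt0 : 0 < c ^ (Z - z) - 1.
  by rewrite subn_gt0 -{1}(expn0 c) ltn_exp2l ?prime_gt1 ?subn_gt0 ?z_lt_Z.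
have := congr1 (logn c) eq_diff.
rewrite -logn_pow3_subn1 lognM ?(ltnW b_gt1) ?pow3_subn1_gt0 // logn_coprime 1?coprime_sym //.
rewrite lognM ?cZz_subn1_gt0 ?expn_gt0 ?(prime_gt0 pc) //.
by rewrite pfactorK // logn_pfactor_subn1 ?prime_gt1 // add0n addn0.
Qed.

Lemma cofactor_eq K :
  b ^ 2 + b + 1 = K * c ^ logn c (b ^ 2 + b + 1) ->
  b * (b - 1) * geom_sum (b ^ 3) N * K = c ^ logn c N * (c ^ (Z - z) - 1).
Proof.
move=> cofactor; set f := logn c _ in cofactor.
apply/eqP; rewrite -(eqn_pmul2r (_ : 0 < c ^ f)) ?expn_gt0 ?prime_gt0 //; apply/eqP.
have -> : b * (b - 1) * geom_sum (b ^ 3) N * K * c ^ f =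
    b * ((b - 1) * (K * c ^ f) * geom_sum (b ^ 3) N) by rewrite !mulnA; lia.
rewrite -cofactor -pow3_subn1_factor eq_diff -{1}logn_cube_root_add -/f expnD.
by rewrite -mulnA mulnC.
Qed.

Lemma cube_root_decomposition :
  logn c N < z /\ exists2 K, coprime K c &
    b ^ 2 + b + 1 = K * c ^ (z - logn c N) /\
    b * (b - 1) * geom_sum (b ^ 3) N * K = c ^ logn c N * (c ^ (Z - z) - 1).
Proof.
have f_gt0 : 0 < logn c (b ^ 2 + b + 1) by rewrite lognE pc dvd_cube_root addn1.
have f_eq : z - logn c N = logn c (b ^ 2 + b + 1) by rewrite -logn_cube_root_add addnK.
split; first by rewrite -logn_cube_root_add -{1}(add0n (logn c N)) ltn_add2r.
have [K cK cofactor] := pfactor_coprime pc (ltn0Sn (b ^ 2 + b)); rewrite -addn1 in cofactor.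
by exists K; rewrite 1?coprime_sym // f_eq -(cofactor_eq cofactor).
Qed.

End CubeOrder.

Theorem mainTheorem9 (r c a b z Y Z N : nat) :
  1 <= r -> c = 2 ^ r * 3 + 1 -> prime c ->
  1 < a -> 1 < b ->
  coprime a b -> coprime b c -> coprime a c ->
  e_ord c b 3 ->
  0 < z -> 0 < Y -> 0 < Z -> z <= Z ->
  Y = 4 %[mod 6] ->
  a + b = c ^ z -> a + b ^ Y = c ^ Z ->
  Y = 1 + 3 * N ->
  let e := logn c N in
  e < z /\
  exists K : nat, 0 < K /\ coprime K c /\
    b ^ 2 + b + 1 = K * c ^ (z - e) /\
    ((b%:Z * (b%:Z - 1) * (Ipoly N).[b%:Z] * K%:Z)
       = (c%:Z ^+ e * (c%:Z ^+ (Z - z) - 1)))%R.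
Proof.
move=> r_gt0 c_def pc _ b_gt1 _ cb _ [_ b_pm1 b_ord] z_gt0 _ _ zZ Y46 eq_z eq_Z YN e.
have oc : odd c by rewrite c_def oddD oddM oddX eqn0Ngt r_gt0.
have b_neq1 : b != 1 %[mod c].
  by move: (b_ord 1 isT isT); rewrite /pm1_mod expn1 negb_or => /andP[].
have oN : odd N by lia.
rewrite YN add1n in eq_Z; have eq_diff := sub_pow_eq eq_z eq_Z zZ.
have [e_lt_z [K cK [cofactor eqK]]] :=
  cube_root_decomposition pc oc b_gt1 cb b_pm1 b_neq1 oN z_gt0 eq_diff.
have K_gt0 : 0 < K by case: K cofactor {cK eqK} => //; rewrite mul0n addn1.
split=> //; exists K; do 3?split => //.
have cZ_ge1 : 1 <= c ^ (Z - z) by rewrite expn_gt0 prime_gt0.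
move/(congr1 (fun n : nat => n%:R : int)): eqK.
by rewrite Ipoly_horner !natrM !natrB ?cZ_ge1 ?(ltnW b_gt1) // !natrX !natz.
Qed.
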